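(* Under the standing assumptions below, for any finite partitions $\mathcal P_1,\mathcal P_2$ of $\lambda$, $I(\mathcal P_1\sqcap\mathcal P_2)=I(\mathcal P_1)\cap I(\mathcal P_2)$.
   Context: Standing assumptions: $G$ is a finite graph with at least one edge which is trivially power-colorable (for every positive integer $n$, every $\chi(G)$-coloring of $G^n$ is of the form $v\mapsto\phi(v_i)$ for some coordinate $i$ and proper coloring $\phi$ of $G$), $k=\chi(G)$, $\lambda$ is an infinite cardinal, and $\Phi$ is a fixed proper $k$-coloring of $G^\lambda$ (vertex set $V(G)^\lambda$, $(v_\xi)$ adjacent to $(w_\xi)$ iff $v_\xi w_\xi\in E(G)$ for all $\xi<\lambda$). A finite partition of $\lambda$ is a partition of $\lambda$ into finitely many nonempty pieces. For a finite partition $\mathcal P$, $V_{\mathcal P}=\{\mathbf v\in V(G^\lambda): \mathbf v\restriction A \text{ is constant for each } A\in\mathcal P\}$, and for $\mathbf v\in V_{\mathcal P}$, $A\in\mathcal P$, $\mathbf v_A$ is the constant value of $\mathbf v$ on $A$. If $\mathcal P=\{A_1,\dots,A_n\}$, the induced subgraph on $V_{\mathcal P}$ is isomorphic to $G^n$ via $\mathbf v\mapsto(\mathbf v_{A_1},\dots,\mathbf v_{A_n})$, so there are $i$ and a proper coloring $\phi$ of $G$ with $\Phi(\mathbf v)=\phi(\mathbf v_{A_i})$ for all $\mathbf v\in V_{\mathcal P}$; since $G$ has an edge, $A_i$ is uniquely determined and is denoted $I(\mathcal P)$. The greatest common refinement is $\mathcal P_1\sqcap\mathcal P_2=\{A\cap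 B: A\in\mathcal P_1, B\in\mathcal P_2, A\cap B\ne\emptyset\}$. *)

From mathcomp Require Import all_boot.
From mathcomp Require Import boolp classical_sets cardinality.
From Stdlib Require Import ClassicalEpsilon.
Set Implicit Arguments. Unset Strict Implicit. Unset Printing Implicit Defensive.
Local Open Scope classical_set_scope.

Section Defs.
Variables (V : finType) (e : rel V).

Definition simple_graph : Prop := symmetric e /\ irreflexive e.
Definition has_edge : Prop := exists u v, e u v.

Definition proper_coloring (k : nat) (phi : V -> 'I_k) : Prop :=
  forall u v, e u v -> phi u <> phi v.

Definition is_chromatic_number (k : nat) : Prop :=
  (exists phi : V -> 'I_k, proper_coloring phi) /\
  (forall m, m < k -> forall phi : V -> 'I_m, ~ proper_coloring phi).

Definition pow_adj (I : Type) (v w : I -> V) : Prop := forall i, e (v i) (w i).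

Definition proper_pow_coloring (I : Type) (k : nat) (c : (I -> V) -> 'I_k) : Prop :=
  forall v w, pow_adj v w -> c v <> c w.

(* trivially power-colorable, with k = chi(G) *)
Definition trivially_power_colorable (k : nat) : Prop :=
  forall n, 0 < n -> forall c : ('I_n -> V) -> 'I_k, proper_pow_coloring c ->
    exists (i : 'I_n) (phi : V -> 'I_k), proper_coloring phi /\
      forall v, c v = phi (v i).

Variable L : Type.

Definition infinite_type : Prop :=
  ~ exists n (f : 'I_n -> L), forall x, exists i, f i = x.

Definition finite_partition (P : set (set L)) : Prop :=
  [/\ finite_set P,
      (forall A, P A -> A !=set0),
      (forall x, exists A, P A /\ A x) &
      (forall A B x, P A -> P B -> A x -> B x -> A = B)].

Definition V_part (P : set (set L)) (v : L -> V) : Prop :=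
  forall A, P A -> forall x y, A x -> A y -> v x = v y.

Definition meet_part (P1 P2 : set (set L)) : set (set L) :=
  [set C | exists A B, [/\ P1 A, P2 B, C = A `&` B & C !=set0]].

Variables (k : nat) (Phi : (L -> V) -> 'I_k).

Definition is_I (P : set (set L)) (A : set L) : Prop :=
  P A /\ exists phi : V -> 'I_k, proper_coloring phi /\
    forall v, V_part P v -> forall x, A x -> Phi v = phi (v x).

(* I(P), chosen by (classical) description; uniquely determined under the
   standing assumptions. *)
Definition I_part (P : set (set L)) : set L :=
  epsilon (inhabits (@set0 L)) (is_I P).

End Defs.

(* For a finite partition Q, the vertices constant on the pieces of Q form a copy of G^n, so trivial
   power-colorability yields a distinguished piece I(Q); it is unique because a vertex that takes a
   fixed value u on one piece and an arbitrary value elsewhere must get a color independent of that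
   arbitrary value, which fails for a neighbour of u. If Q refines P, every vertex constant on the pieces
   of P is constant on those of Q, so the coloring rule given by I(Q) is a valid rule for the piece of P
   containing I(Q). The meet refines both partitions, and I(meet) = A ∩ B with A ∈ P1, B ∈ P2, so by
   uniqueness A = I(P1) and B = I(P2). *)
From mathcomp Require Import all_boot.
From mathcomp Require Import boolp classical_sets cardinality.
From Stdlib Require Import ClassicalEpsilon.
Set Implicit Arguments. Unset Strict Implicit. Unset Printing Implicit Defensive.
Local Open Scope classical_set_scope.

Lemma finite_set_enum T (Q : set T) : finite_set Q ->
  exists n (g : 'I_n -> T), (forall i, Q (g i)) /\ (forall C, Q C -> exists i, g i = C).
Proof.
case=> n /card_esym /card_bijP [f [h fK hK]].
have lt_n (i : 'I_n) : nat_of_ord i \in `I_n by rewrite inE /=.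
exists n, (fun i => val (f (SigSub (lt_n i)))); split.
  by move=> i; have := set_valP (f (SigSub (lt_n i))).
move=> C QC; have QC' : C \in Q by rewrite inE.
have hC_lt := set_valP (h (SigSub QC')); exists (Ordinal hC_lt).
have -> : SigSub (lt_n (Ordinal hC_lt)) = h (SigSub QC') by apply: val_inj.
by rewrite hK.
Qed.

Lemma infinite_type_inhabited (L : Type) : infinite_type L -> inhabited L.
Proof.
move=> HL; apply: contrapT => noL; apply: HL.
exists 0, (fun i : 'I_0 => False_rect L (notF (ltn_ord i))).
by move=> x; exfalso; apply: noL.
Qed.

Definition refines {L : Type} (Q P : set (set L)) : Prop :=
  forall C, Q C -> exists A, P A /\ C `<=` A.

Section MeetPartition.
Variables (L : Type) (P1 P2 : set (set L)).

Lemma finite_partition_meet :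
  finite_partition P1 -> finite_partition P2 -> finite_partition (meet_part P1 P2).
Proof.
case=> fin1 _ cov1 dis1 [fin2 _ cov2 dis2]; split.
- apply: (sub_finite_set (B := (fun p : set L * set L => p.1 `&` p.2) @` (P1 `*` P2))).
    by move=> C [A [B [PA PB -> _]]]; exists (A, B).
  exact/finite_image/finite_setX.
- by move=> C [A [B []]].
- move=> x; have [A [PA Ax]] := cov1 x; have [B [PB Bx]] := cov2 x.
  by exists (A `&` B); split => //; exists A, B; split => //; exists x.
- move=> C D x [A [B [PA PB -> _]]] [A' [B' [PA' PB' -> _]]] [Ax Bx] [A'x B'x].
  by rewrite (dis1 A A' x PA PA' Ax A'x) (dis2 B B' x PB PB' Bx B'x).
Qed.

Lemma meet_refinesl : refines (meet_part P1 P2) P1.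
Proof. by move=> C [A [B [PA _ -> _]]]; exists A; split => // x []. Qed.

Lemma meet_refinesr : refines (meet_part P1 P2) P2.
Proof. by move=> C [A [B [_ PB -> _]]]; exists B; split => // x []. Qed.

End MeetPartition.

Section DistinguishedPiece.
Variables (V : finType) (e : rel V) (L : Type) (k : nat) (Phi : (L -> V) -> 'I_k).

Lemma V_part_refines (Q P : set (set L)) (v : L -> V) :
  refines Q P -> V_part P v -> V_part Q v.
Proof.
move=> QP Pv C QC x y Cx Cy; have [A [PA CA]] := QP C QC.
exact: Pv _ PA _ _ (CA _ Cx) (CA _ Cy).
Qed.

Lemma is_I_refines (Q P : set (set L)) (C A : set L) (z : L) :
  refines Q P -> P A -> C `<=` A -> C z -> is_I e Phi Q C -> is_I e Phi P A.
Proof.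
move=> QP PA CA Cz [_ [phi [phi_proper Qphi]]]; split => //.
exists phi; split => // v Pv x Ax.
by rewrite (Qphi v (V_part_refines QP Pv) z Cz) (Pv _ PA _ _ (CA _ Cz) Ax).
Qed.

(* [test a] is [u] on [A] and [a] elsewhere: the rule of [A] colors it [phi u] for every [a],
   so the rule [phi'] of a second piece would be constant. *)
Lemma is_I_uniq (P : set (set L)) (A A' : set L) :
  has_edge e -> finite_partition P -> is_I e Phi P A -> is_I e Phi P A' -> A = A'.
Proof.
move=> [u [w euw]] [_ Pne _ Pdis] [PA [phi [_ Aphi]]] [PA' [phi' [phi'_proper A'phi']]].
apply: contrapT => neqAA'.
have [x Ax] := Pne _ PA; have [x' A'x'] := Pne _ PA'.
have nAx' : ~ A x' by move=> Ax'; apply: neqAA'; exact: Pdis _ _ x' PA PA' Ax' A'x'.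
pose test (a : V) (y : L) := if pselect (A y) then u else a.
have test_part a : V_part P (test a).
  move=> C PC y y' Cy Cy'; rewrite /test.
  case: pselect => Ay; case: pselect => Ay' //; exfalso.
  - by apply: Ay'; rewrite (Pdis _ _ y PA PC Ay Cy).
  - by apply: Ay; rewrite (Pdis _ _ y' PA PC Ay' Cy').
have test_in a : test a x = u by rewrite /test; case: pselect.
have test_out a : test a x' = a by rewrite /test; case: pselect.
have phi'_const a : phi' a = phi u.
  by rewrite -{1}(test_out a) -(A'phi' _ (test_part a) x' A'x') (Aphi _ (test_part a) x Ax) test_in.
by apply: (phi'_proper u w euw); rewrite !phi'_const.
Qed.

Lemma I_part_eq (P : set (set L)) (A : set L) :
  has_edge e -> finite_partition P -> is_I e Phi P A -> I_part e Phi P = A.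
Proof.
move=> Hedge HP IA; apply: (is_I_uniq Hedge HP) => //.
exact: epsilon_spec (inhabits set0) (is_I e Phi P) (ex_intro _ A IA).
Qed.

(* Enumerating the pieces as [g : 'I_n -> set L], the vertices of [V_part Q] are the
   [w \o idx] for [w : 'I_n -> V], where [idx y] is the index of the piece containing [y]. *)
Lemma is_I_exists (Q : set (set L)) :
  trivially_power_colorable e k -> proper_pow_coloring e Phi ->
  inhabited L -> finite_partition Q -> exists C, is_I e Phi Q C.
Proof.
move=> Htpc HPhi [x0] [/finite_set_enum [n [g [gQ gsurj]]] Qne Qcov _].
have piece_of y : exists i, g i y.
  by have [C [QC Cy]] := Qcov y; have [i giC] := gsurj C QC; exists i; rewrite giC.
have [idx g_idx] := boolp.choice piece_of.
have [pt g_pt] := boolp.choice (fun i => Qne _ (gQ i)).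
pose c (w : 'I_n -> V) := Phi (w \o idx).
have c_proper : proper_pow_coloring e c by move=> w w' ww'; apply: HPhi => y; exact: ww'.
have n_gt0 : 0 < n := leq_ltn_trans (leq0n _) (ltn_ord (idx x0)).
have [i [phi [phi_proper c_phi]]] := Htpc n n_gt0 c c_proper.
exists (g i); split; first exact: gQ.
exists phi; split => // v Qv x gix.
transitivity (c (v \o pt)).
  congr Phi; apply: funext => y.
  exact: Qv _ (gQ (idx y)) _ _ (g_idx y) (g_pt (idx y)).
by rewrite c_phi /= (Qv _ (gQ i) _ _ (g_pt i) gix).
Qed.

End DistinguishedPiece.

Theorem mainTheorem17 (V : finType) (e : rel V) (k : nat) (L : Type)
  (Phi : (L -> V) -> 'I_k)
  (HG : simple_graph e) (Hedge : has_edge e)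
  (Hchi : is_chromatic_number e k)
  (Htpc : trivially_power_colorable e k)
  (HL : infinite_type L)
  (HPhi : proper_pow_coloring e Phi)
  (P1 P2 : set (set L)) :
  finite_partition P1 -> finite_partition P2 ->
  I_part e Phi (meet_part P1 P2) = I_part e Phi P1 `&` I_part e Phi P2.
Proof.
move=> HP1 HP2.
have HQ := finite_partition_meet HP1 HP2.
have [C IC] := is_I_exists Htpc HPhi (infinite_type_inhabited HL) HQ.
rewrite (I_part_eq Hedge HQ IC).
have [[A [B [PA PB defC [z Cz]]]] _] := IC.
have IA : is_I e Phi P1 A.
  by apply: (is_I_refines (@meet_refinesl _ P1 P2) PA _ Cz IC); rewrite defC; exact: subIsetl.
have IB : is_I e Phi P2 B.
  by apply: (is_I_refines (@meet_refinesr _ P1 P2) PB _ Cz IC); rewrite defC; exact: subIsetr.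
by rewrite (I_part_eq Hedge HP1 IA) (I_part_eq Hedge HP2 IB).
Qed.
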